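(* Let $0<\varepsilon<1/4$ and $r=(10/\varepsilon^2)\log(1/\varepsilon)$. Let $G$ be a bipartite graph with at least one edge, and let $H$ be a balanced bipartite subgraph of $G$ with parts $A,B$, $|A|=|B|=m$, that maximizes $\Phi(F)=d_F^{\,r}\,v(F)$ over all balanced bipartite subgraphs $F$ of $G$. Assume $\varepsilon m$ is a positive integer. Then for all $A_1\subseteq A$, $B_1\subseteq B$ with $|A_1|=|B_1|=\varepsilon m$ we have $$d(A_1,B_1)\le d_H\,(1+\varepsilon^2/5).$$
   Context: $\log$ is the natural logarithm; $v(F)$ is the number of vertices of $F$. A bipartite graph is balanced if its two parts have equal size. For disjoint vertex sets $X,Y$, $d(X,Y)=e(X,Y)/(|X|\,|Y|)$ (number of edges between $X$ and $Y$ divided by $|X||Y|$); the density $d_F$ of a bipartite graph $F$ is this quantity for its two parts. *)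

From HB Require Import structures.
From mathcomp Require Import all_boot all_order all_algebra.
From mathcomp Require Import reals exp.
Set Implicit Arguments. Unset Strict Implicit. Unset Printing Implicit Defensive.
Import Order.TTheory GRing.Theory Num.Theory.
Local Open Scope ring_scope.

Section Defs.
Variable T : finType.

Definition is_graph (e : rel T) := symmetric e /\ irreflexive e.

Definition bipartite_graph (e : rel T) :=
  exists P : {set T}, forall x y, e x y -> (x \in P) != (y \in P).

Definition ecount (e : rel T) (X Y : {set T}) : nat :=
  #|[set p : T * T | [&& p.1 \in X, p.2 \in Y & e p.1 p.2]]|.

Definition dens {R : realType} (e : rel T) (X Y : {set T}) : R :=
  (ecount e X Y)%:R / (#|X| * #|Y|)%:R.

Definition is_bal_bip_subgraph (eG : rel T) (X Y : {set T}) (eF : rel T) :=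
  [/\ [disjoint X & Y], #|X| = #|Y|, (0 < #|X|)%N,
      symmetric eF /\ subrel eF eG &
      forall x y, eF x y -> (x \in X /\ y \in Y) \/ (x \in Y /\ y \in X)].

Definition Phi {R : realType} (r : R) (eF : rel T) (X Y : {set T}) : R :=
  powR (dens eF X Y) r * (#|X| + #|Y|)%:R.
End Defs.

Definition rpar {R : realType} (eps : R) : R := 10 / eps ^+ 2 * ln (1 / eps).

From HB Require Import structures.
From mathcomp Require Import all_boot all_order all_algebra.
From mathcomp Require Import reals sequences exp.
From mathcomp Require Import lra.
Import Order.TTheory GRing.Theory Num.Theory.
Local Open Scope ring_scope.

(* Fix A1, B1 of size
   k = eps*m inside the parts of the maximiser H and let F be the subgraph
   of H induced between A1 and B1.  F is again a balanced bipartite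
   subgraph of G with d_F = d(A1,B1) and v(F) = eps * v(H), so maximality
   of H gives  d(A1,B1)^r * eps <= d_H^r.  Taking logarithms,
   r (ln d(A1,B1) - ln d_H) <= ln (1/eps), and the choice
   r = (10/eps^2) ln (1/eps) turns this into
   d(A1,B1) <= d_H * exp (eps^2/10) <= d_H * (1 + eps^2/5). *)

Section InducedSubgraph.
Context {T : finType}.

Definition induced_rel (eH : rel T) (X Y : {set T}) : rel T :=
  [rel x y | eH x y && ((x \in X) && (y \in Y) || (x \in Y) && (y \in X))].

Lemma induced_bal_bip_subgraph {eG eH : rel T} {X Y : {set T}} :
  symmetric eH -> subrel eH eG -> [disjoint X & Y] ->
  #|X| = #|Y| -> (0 < #|X|)%N ->
  is_bal_bip_subgraph eG X Y (induced_rel eH X Y).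
Proof.
move=> symH subH dXY cXY X0; split=> //.
- split=> x y; rewrite /induced_rel /=; last by case/andP=> /subH.
  by rewrite symH orbC [(y \in Y) && _]andbC [(y \in X) && _]andbC.
- move=> x y; rewrite /induced_rel /= => /andP[_ /orP[/andP[? ?]|/andP[? ?]]].
  + by left.
  + by right.
Qed.

Lemma ecount_induced (eH : rel T) (X Y : {set T}) :
  ecount (induced_rel eH X Y) X Y = ecount eH X Y.
Proof.
rewrite /ecount; apply: eq_card => -[x y]; rewrite !inE /induced_rel /=.
by case: (x \in X); case: (y \in Y); rewrite ?andbT ?andbF.
Qed.

Lemma dens_ge0 {R : realType} (eF : rel T) (X Y : {set T}) :
  0 <= dens eF X Y :> R.
Proof. exact: divr_ge0. Qed.

Lemma dens_induced {R : realType} (eH : rel T) (X Y : {set T}) :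
  dens eH X Y = dens (induced_rel eH X Y) X Y :> R.
Proof. by rewrite /dens ecount_induced. Qed.

Lemma Phi_le_density_pow {R : realType} {r c : R} {eF eH : rel T}
    {X Y A B : {set T}} {k m : nat} :
  #|X| = k -> #|Y| = k -> #|A| = m -> #|B| = m -> (0 < m)%N ->
  k%:R = c * m%:R ->
  Phi r eF X Y <= Phi r eH A B ->
  powR (dens eF X Y) r * c <= powR (dens eH A B) r.
Proof.
rewrite /Phi => -> -> -> -> m0 hk; rewrite !natrD hk.
have m2 : 0 < (m%:R + m%:R : R) by rewrite addr_gt0 // ltr0n.
by rewrite -mulrDr mulrA ler_pM2r.
Qed.

End InducedSubgraph.

Section RealInequalities.
Variable R : realType.
Implicit Types eps c r x y : R.

Lemma ln_inv_gt0 {eps} : 0 < eps -> eps < 1 -> 0 < ln (1 / eps).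
Proof. by move=> e0 e1; apply: ln_gt0; rewrite ltr_pdivlMr // mul1r. Qed.

Lemma rpar_gt0 {eps} : 0 < eps -> eps < 1 -> 0 < rpar eps.
Proof.
by move=> e0 e1; rewrite mulr_gt0 ?divr_gt0 ?exprn_gt0 // ln_inv_gt0.
Qed.

Lemma powR_dominated_gt0 {r c x y} :
  0 < r -> 0 < c -> 0 < x -> 0 <= y -> powR x r * c <= powR y r -> 0 < y.
Proof.
move=> r0 c0 x0 y0 h; apply: (gt0_powR r0 y0).
by apply: lt_le_trans h; rewrite mulr_gt0 // powR_gt0.
Qed.

Lemma powR_le_ln {r c x y} : 0 < c -> 0 < x -> 0 < y ->
  powR x r * c <= powR y r -> r * (ln x - ln y) <= - ln c.
Proof.
move=> c0 x0 y0 h.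
have : ln (powR x r * c) <= ln (powR y r).
  by rewrite ler_ln ?posrE ?mulr_gt0 ?powR_gt0.
rewrite lnM ?posrE ?powR_gt0 // !ln_powR; lra.
Qed.

Lemma rpar_log_gap {eps x} :
  0 < eps -> eps < 1 -> rpar eps * x <= ln (1 / eps) -> x <= eps ^+ 2 / 10.
Proof.
move=> e0 e1; have L0 := ln_inv_gt0 e0 e1.
have e2 : 0 < eps ^+ 2 by rewrite exprn_gt0.
rewrite /rpar mulrAC -[X in _ <= X]mul1r ler_pM2r // mulrC.
by rewrite -ler_pdivlMr ?divr_gt0 // invf_div mul1r.
Qed.

(* exp(y/2) <= 1 + y on [0, 1], from exp(-y/2) >= 1 - y/2. *)
Lemma expR_half_le {y} : 0 <= y -> y <= 1 -> expR (y / 2) <= 1 + y.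
Proof.
move=> y0 y1.
have hb := expR_ge1Dx (- (y / 2)).
have hab := expRxMexpNx_1 (y / 2).
have ha := expR_gt0 (y / 2).
nra.
Qed.

Lemma density_increment_bound {eps d d1} :
  0 < eps -> eps < 1 / 4 -> 0 <= d -> 0 <= d1 ->
  powR d1 (rpar eps) * eps <= powR d (rpar eps) ->
  d1 <= d * (1 + eps ^+ 2 / 5).
Proof.
move=> e0 e4 d0 d10 h.
have e1 : eps < 1 by lra.
have y0 : 0 <= eps ^+ 2 / 5 by rewrite divr_ge0 ?sqr_ge0.
have [->|d1p] := eqVneq d1 0; first by rewrite mulr_ge0 // addr_ge0.
have d1g : 0 < d1 by rewrite lt_def d1p.
have dg := powR_dominated_gt0 (rpar_gt0 e0 e1) e0 d1g d0 h.
have gap : ln d1 - ln d <= eps ^+ 2 / 10.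
  apply: rpar_log_gap => //.
  by rewrite div1r lnV ?posrE // powR_le_ln.
have y1 : eps ^+ 2 / 5 <= 1 by rewrite ler_pdivrMr // mul1r expr2; nra.
apply: (le_trans _ (ler_wpM2l d0 (expR_half_le y0 y1))).
(* d1 = exp (ln d1) <= exp (ln d + eps^2/10) = d * exp (eps^2/10). *)
rewrite -[X in X <= _](lnK (x:=d1)) ?posrE // -[X in _ <= X * _](lnK (x:=d)) ?posrE //.
rewrite -expRD ler_expR; lra.
Qed.

End RealInequalities.

Theorem lemma3p3 (R : realType) (eps : R) (T : finType) (eG : rel T)
    (A B : {set T}) (eH : rel T) (m k : nat) :
  0 < eps -> eps < 1 / 4 ->
  is_graph eG -> bipartite_graph eG -> (exists x y, eG x y) ->
  is_bal_bip_subgraph eG A B eH -> #|A| = m ->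
  (forall (X Y : {set T}) (eF : rel T), is_bal_bip_subgraph eG X Y eF ->
      Phi (rpar eps) eF X Y <= Phi (rpar eps) eH A B) ->
  (0 < k)%N -> k%:R = eps * m%:R ->
  forall A1 B1 : {set T}, A1 \subset A -> B1 \subset B ->
    #|A1| = k -> #|B1| = k ->
    dens eH A1 B1 <= dens eH A B * (1 + eps ^+ 2 / 5).
Proof.
move=> e0 e4 _ _ _ [dAB cAB _ [symH subH] _] hA hmax k0 hk A1 B1 sA sB hA1 hB1.
have m0 : (0 < m)%N.
  by rewrite lt0n; apply: contraTneq k0 => m0; rewrite -(ltr0n R) hk m0 mulr0 ltxx.
have hF : is_bal_bip_subgraph eG A1 B1 (induced_rel eH A1 B1).
  apply: induced_bal_bip_subgraph symH subH (disjointW sA sB dAB) _ _.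
  - by rewrite hA1 hB1.
  - by rewrite hA1.
have hB : #|B| = m by rewrite -cAB.
have hpow := Phi_le_density_pow hA1 hB1 hA hB m0 hk (hmax _ _ _ hF).
rewrite (dens_induced eH A1 B1).
exact: density_increment_bound e0 e4 (dens_ge0 _ _ _) (dens_ge0 _ _ _) hpow.
Qed.
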